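(* Let $d,n\ge 1$, let $\mathbf{x}_1,\ldots,\mathbf{x}_n\in\mathbb{R}^d$ (column vectors), $y_1,\ldots,y_n\in\mathbb{R}$, and $\eta>0$. Consider the causal (auto-regressive) linear self-attention layer acting on a sequence $(\mathbf{z}_1,\ldots,\mathbf{z}_n)$ of vectors in $\mathbb{R}^{d+1}$ by $$\mathbf{z}_j\leftarrow \mathbf{z}_j+\mathbf{P}\mathbf{V}\sum_{i=1}^j \mathbf{z}_i\left(\mathbf{z}_i^\top\mathbf{K}^\top\mathbf{Q}\mathbf{z}_j\right),\qquad j=1,\ldots,n,$$ with parameters $$\mathbf{K}=\mathbf{Q}=\begin{pmatrix}\mathbf{I}_{d\times d}&\mathbf{0}\\ 0&0\end{pmatrix},\quad \mathbf{V}=\begin{pmatrix}\mathbf{0}_{d\times d}&\mathbf{0}\\ \mathbf{0}&-1\end{pmatrix},\quad \mathbf{P}=\frac{\eta}{n}\mathbf{I}.$$ Apply $l$ such layers in succession (all with these same parameters) to the input $\mathbf{z}_j^{(0)}=(\mathbf{x}_j^\top,y_j)^\top$, $j=1,\ldots,n$, and denote by $\mathbf{z}_j^{(l)}$ the output of the $l$-th layer. For each position $j$ define row vectors $\mathbf{w}_j^{(l)}\in\mathbb{R}^{1\times d}$ by $\mathbf{w}_j^{(0)}=0$ and $$\mathbf{w}_j^{(l)}=\mathbf{w}_j^{(l-1)}+\frac{\eta}{n}\sum_{i=1}^j\left(y_i-\mathbf{w}_i^{(l-1)}\mathbf{x}_i\right)\mathbf{x}_i^\top,\qquad l\ge 1.$$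 Then for every $l\ge 0$ and every $j$, $\mathbf{z}_j^{(l)}=(\mathbf{x}_j^\top,\delta_j^{(l)})^\top$ where $\delta_j^{(l)}=y_j-\mathbf{w}_j^{(l)}\mathbf{x}_j$.
   Context: Weight vectors are $1\times d$ row vectors and inputs $\mathbf{x}_i$ are $d\times 1$ column vectors, so $\mathbf{w}\mathbf{x}_i$ is a scalar. *)

From HB Require Import structures.
From mathcomp Require Import all_boot all_order all_algebra.
Set Implicit Arguments. Unset Strict Implicit. Unset Printing Implicit Defensive.
Import Order.TTheory GRing.Theory Num.Theory.
Local Open Scope ring_scope.

Section LSA.
Variables (R : realFieldType) (d n : nat) (eta : R).

Definition Kmat : 'M[R]_(d + 1) := block_mx 1%:M 0 0 0.
Definition Qmat : 'M[R]_(d + 1) := block_mx 1%:M 0 0 0.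
Definition Vmat : 'M[R]_(d + 1) := block_mx 0 0 0 (-1)%:M.
Definition Pmat : 'M[R]_(d + 1) := (eta / n%:R) *: 1%:M.

Definition lsa_layer (z : 'I_n -> 'cV[R]_(d + 1)) : 'I_n -> 'cV[R]_(d + 1) :=
  fun j => z j + Pmat *m Vmat *m
    (\sum_(i < n | (i <= j)%N) z i *m ((z i)^T *m Kmat^T *m Qmat *m z j)).

Definition lsa_iter (l : nat) (z0 : 'I_n -> 'cV[R]_(d + 1)) :=
  iter l lsa_layer z0.

Definition lsa_input (x : 'I_n -> 'cV[R]_d) (y : 'I_n -> R) : 'I_n -> 'cV[R]_(d + 1) :=
  fun j => col_mx (x j) (y j)%:M.

Fixpoint wseq (x : 'I_n -> 'cV[R]_d) (y : 'I_n -> R) (l : nat) : 'I_n -> 'rV[R]_d :=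
  match l with
  | 0 => fun _ => 0
  | l'.+1 => fun j => wseq x y l' j + (eta / n%:R) *:
      \sum_(i < n | (i <= j)%N) ((y i - (wseq x y l' i *m x i) 0 0) *: (x i)^T)
  end.

End LSA.

(* Each layer leaves the x-block of every token unchanged and subtracts from
   the last coordinate (eta/n) sum_{i<=j} c_i x_i^T x_j, because K^T Q projects
   onto the x-block and P V onto the last coordinate.  The residuals
   delta_j = y_j - w_j x_j obey exactly this recursion when w takes the causal
   gradient step, so the theorem follows by induction on the number of layers. *)
From HB Require Import structures.
From mathcomp Require Import all_boot all_order all_algebra.
Set Implicit Arguments. Unset Strict Implicit. Unset Printing Implicit Defensive.
Import Order.TTheory GRing.Theory Num.Theory.
Local Open Scope ring_scope.

Lemma sum_col_mx (R : pzRingType) (I : Type) (r : seq I) (P : pred I)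
    (m1 m2 p : nat) (F : I -> 'M[R]_(m1, p)) (G : I -> 'M[R]_(m2, p)) :
  \sum_(i <- r | P i) col_mx (F i) (G i)
  = col_mx (\sum_(i <- r | P i) F i) (\sum_(i <- r | P i) G i).
Proof.
apply: (big_rec3 (fun a b c => a = col_mx b c)); first by rewrite col_mx0.
by move=> i A B C _ ->; rewrite add_col_mx.
Qed.

Section LinearSelfAttention.
Variables (R : realFieldType) (d n : nat) (eta : R).

Definition lsa_tokens (x : 'I_n -> 'cV[R]_d) (c : 'I_n -> R) j : 'cV[R]_(d + 1) :=
  col_mx (x j) (c j)%:M.

Lemma lsa_score (u v : 'cV[R]_d) (a b : R) :
  (col_mx u a%:M)^T *m (Kmat R d)^T *m Qmat R d *m col_mx v b%:M = u^T *m v.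
Proof.
rewrite /Kmat /Qmat tr_col_mx tr_block_mx !trmx1 !trmx0.
by rewrite !mul_row_block !mulmx0 !mulmx1 !addr0 mul_row_col mul0mx addr0.
Qed.

Lemma lsa_value (u : 'cV[R]_d) (a : R) :
  Pmat d n eta *m Vmat R d *m col_mx u a%:M = col_mx 0 (- (eta / n%:R * a))%:M.
Proof.
rewrite /Pmat /Vmat -!scalemxAl mul1mx mul_block_col !mul0mx !addr0 add0r.
by rewrite scale_col_mx scaler0 -scalar_mxM mulN1r scale_scalar_mx mulrN.
Qed.

Lemma lsa_layer_tokens (x : 'I_n -> 'cV[R]_d) (c : 'I_n -> R) z :
    z =1 lsa_tokens x c ->
  lsa_layer eta z =1 lsa_tokens x (fun j =>
    c j - eta / n%:R * \sum_(i < n | (i <= j)%N) c i * ((x i)^T *m x j) 0 0).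
Proof.
move=> hz j; rewrite /lsa_layer /lsa_tokens !hz.
under eq_bigr => i _ do rewrite !hz lsa_score [_^T *m x j]mx11_scalar
  mul_mx_scalar scale_col_mx scale_scalar_mx mulrC.
by rewrite sum_col_mx -raddf_sum lsa_value add_col_mx addr0 -raddfD.
Qed.

Variables (x : 'I_n -> 'cV[R]_d) (y : 'I_n -> R).

Definition wresidual l j := y j - (wseq eta x y l j *m x j) 0 0.

Lemma wresidualS l j :
  wresidual l.+1 j
  = wresidual l j - eta / n%:R * \sum_(i < n | (i <= j)%N)
                                   wresidual l i * ((x i)^T *m x j) 0 0.
Proof.
rewrite /wresidual /= mulmxDl [in LHS]mxE -scalemxAl.
rewrite [X in _ - (_ + X)]mxE mulmx_suml summxE opprD addrA.
by congr (_ - _ * _); apply: eq_bigr => i _; rewrite -scalemxAl mxE.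
Qed.

Lemma lsa_iter_tokens l : lsa_iter eta l (lsa_input x y) =1 lsa_tokens x (wresidual l).
Proof.
elim: l => [|l IH] j.
  by rewrite /lsa_iter /= /lsa_input /lsa_tokens /wresidual mul0mx mxE subr0.
by rewrite /lsa_iter iterS (lsa_layer_tokens IH) /lsa_tokens wresidualS.
Qed.

End LinearSelfAttention.

Theorem proposition2 (R : realFieldType) (d n : nat) (hd : (1 <= d)%N) (hn : (1 <= n)%N)
  (x : 'I_n -> 'cV[R]_d) (y : 'I_n -> R) (eta : R) (heta : 0 < eta) :
  forall (l : nat) (j : 'I_n),
    lsa_iter eta l (lsa_input x y) j
    = col_mx (x j) (y j - (wseq eta x y l j *m x j) 0 0)%:M.
Proof. by move=> l j; rewrite lsa_iter_tokens. Qed.
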